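(* Let $a_1>a_2>\cdots>a_n$ be real numbers in $[a,b]$ and $w_1,\dots,w_n$ real weights with \[ \sum_{i=1}^n w_i=\sum_{i=1}^n w_ia_i=\sum_{i=1}^n w_ia_i^2=0. \] For $1\le j\le n$ write $W_j=\sum_{i=1}^j w_i$, $M_j=\sum_{i=1}^j w_ia_i$, $Q_j=\sum_{i=1}^j w_ia_i^2$. Then $\sum_{i=1}^n w_if(a_i)\ge 0$ holds for every three times differentiable $f:[a,b]\to\mathbb{R}$ with $f'''\ge 0$ if and only if \[ W_jQ_j\ge M_j^2 \] for every $j\in\{1,\dots,n-1\}$ satisfying $W_j a_j\ge M_j\ge W_j a_{j+1}$. *)

From Stdlib Require Import Reals Lra Lia.
Open Scope R_scope.

Fixpoint sum1 (F : nat -> R) (j : nat) : R :=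
  match j with
  | O => 0
  | S k => sum1 F k + F (S k)
  end.

(* g is the derivative of f on the closed interval [a,b], as a function
   on [a,b]: at every x in [a,b], (f(x+h)-f(x))/h -> g x as h -> 0 with
   h <> 0 and x+h in [a,b] (one-sided at the endpoints). *)
Definition deriv_on (f g : R -> R) (a b : R) : Prop :=
  forall x, a <= x <= b ->
    limit1_in (fun h => (f (x + h) - f x) / h)
              (fun h => h <> 0 /\ a <= x + h <= b) (g x) 0.

(* With [W_j], [M_j], [Q_j] the partial sums of [w_i],
   [w_i a_i], [w_i a_i^2], let [mq j x = Q_j - 2 x M_j + x^2 W_j], which equals
   [sum_(i <= j) w_i (a_i - x)^2].

   Sufficiency is summation by parts: [Phi_j = mq_j f2 + 2 (M_j - x W_j) f1 + 2 W_j f]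
   has derivative [mq_j f3], and [2 sum_i w_i f(a_i)] telescopes into the
   increments of [Phi_j] over the gaps [[a_(j+1), a_j]].  Each increment is
   nonnegative once [mq_j] is nonnegative on its gap, and this follows from the
   moment condition by a minimum argument on the node values [mq_j (a_j)], which
   vanish at [j = 1] and [j = n].

   Necessity: if the moment condition fails at a gap, the second difference
   [(x-m+d)_+^4 - 2 (x-m)_+^4 + (x-m-d)_+^4] for a small window [[m-d, m+d]]
   inside the gap has a hat function as third derivative, yet makes the sum
   negative. *)

From Stdlib Require Import Reals Lra Lia Psatz.
From Coquelicot Require Import Coquelicot.
Open Scope R_scope.

Lemma limit1_in_ext (f g : R -> R) (D : R -> Prop) (l x0 : R) :
  (forall h, D h -> f h = g h) -> limit1_in f D l x0 -> limit1_in g D l x0.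
Proof.
  intros Efg Hf eps Heps.
  destruct (Hf eps Heps) as [alp [Halp Hclose]].
  exists alp; split; [exact Halp|].
  intros h [Dh Hh]. rewrite <- Efg by exact Dh. now apply Hclose.
Qed.

Lemma limit1_in_id (D : R -> Prop) : limit1_in (fun h => h) D 0 0.
Proof. intros eps Heps. exists eps; split; [exact Heps|]. now intros h [_ Hh]. Qed.

Lemma deriv_on_of_derivable (f f' : R -> R) (a b : R) :
  (forall x, derivable_pt_lim f x (f' x)) -> deriv_on f f' a b.
Proof.
  intros Hf x _ eps Heps.
  destruct (Hf x eps Heps) as [del Hdel].
  exists del; split; [apply cond_pos|].
  intros h [[Hh0 _] Hh]. simpl in Hh. unfold R_dist in Hh. rewrite Rminus_0_r in Hh.
  now apply Hdel.
Qed.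

Lemma deriv_on_of_is_derive (f f' : R -> R) (a b : R) :
  (forall x, is_derive f x (f' x)) -> deriv_on f f' a b.
Proof. intros Hf. apply deriv_on_of_derivable. intros x. now apply is_derive_Reals. Qed.

Lemma deriv_on_ext (f f' g g' : R -> R) (a b : R) :
  (forall x, f x = g x) -> (forall x, f' x = g' x) ->
  deriv_on f f' a b -> deriv_on g g' a b.
Proof.
  intros Efg Ef'g' Hf x Hx. rewrite <- Ef'g'.
  apply limit1_in_ext with (2 := Hf x Hx). intros h _. now rewrite !Efg.
Qed.

Lemma deriv_on_plus (f f' g g' : R -> R) (a b : R) :
  deriv_on f f' a b -> deriv_on g g' a b ->
  deriv_on (fun x => f x + g x) (fun x => f' x + g' x) a b.
Proof.
  intros Hf Hg x Hx.
  apply limit1_in_ext with (2 := limit_plus _ _ _ _ _ _ (Hf x Hx) (Hg x Hx)).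
  intros h _. unfold Rdiv. ring.
Qed.

(* The product rule: the difference quotient of [f * g] is
   [(f x + h q_f(h)) q_g(h) + g x q_f(h)] with [q_f], [q_g] the quotients of [f], [g]. *)
Lemma deriv_on_mul (f f' g g' : R -> R) (a b : R) :
  deriv_on f f' a b -> deriv_on g g' a b ->
  deriv_on (fun x => f x * g x) (fun x => f' x * g x + f x * g' x) a b.
Proof.
  intros Hf Hg x Hx.
  set (qf := fun h => (f (x + h) - f x) / h).
  set (qg := fun h => (g (x + h) - g x) / h).
  replace (f' x * g x + f x * g' x) with ((f x + 0 * f' x) * g' x + g x * f' x) by ring.
  apply limit1_in_ext with (fun h => (f x + h * qf h) * qg h + g x * qf h).
  { intros h [Hh _]. unfold qf, qg. field. exact Hh. }
  apply limit_plus; apply limit_mul.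
  - apply limit_plus; [apply limit_free|].
    apply limit_mul; [apply limit1_in_id | exact (Hf x Hx)].
  - exact (Hg x Hx).
  - apply limit_free.
  - exact (Hf x Hx).
Qed.

Lemma deriv_on_scal (c : R) (f f' : R -> R) (a b : R) :
  deriv_on f f' a b -> deriv_on (fun x => c * f x) (fun x => c * f' x) a b.
Proof.
  intros Hf.
  assert (Hc : deriv_on (fun _ => c) (fun _ => 0) a b).
  { apply deriv_on_of_is_derive. intros x. now auto_derive. }
  apply deriv_on_ext with (3 := deriv_on_mul _ _ _ _ a b Hc Hf); intros x; ring.
Qed.

(* A function with a derivative on [a,b] is continuous on [a,b]: near [x] the
   difference quotient is bounded by [|f' x| + 1]. *)
Lemma deriv_on_continuous (f f' : R -> R) (a b x : R) :
  deriv_on f f' a b -> a <= x <= b ->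
  forall eps, 0 < eps -> exists del, 0 < del /\
    forall y, a <= y <= b -> Rabs (y - x) < del -> Rabs (f y - f x) < eps.
Proof.
  intros Hf Hx eps Heps.
  destruct (Hf x Hx 1 Rlt_0_1) as [alp [Halp Hquot]].
  set (K := Rabs (f' x) + 1).
  assert (HK : 0 < K) by (unfold K; pose proof (Rabs_pos (f' x)); lra).
  exists (Rmin alp (eps / K)); split.
  { apply Rmin_glb_lt; [exact Halp | now apply Rdiv_lt_0_compat]. }
  intros y Hy Hyx.
  destruct (Req_dec y x) as [->|Hne]; [rewrite Rminus_diag, Rabs_R0; exact Heps|].
  assert (Hyx1 : Rabs (y - x) < alp) by (eapply Rlt_le_trans; [exact Hyx | apply Rmin_l]).
  assert (Hyx2 : Rabs (y - x) < eps / K) by (eapply Rlt_le_trans; [exact Hyx | apply Rmin_r]).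
  assert (Hq : Rabs ((f y - f x) / (y - x) - f' x) < 1).
  { specialize (Hquot (y - x)). simpl in Hquot. unfold R_dist in Hquot.
    replace (x + (y - x)) with y in Hquot by ring. rewrite Rminus_0_r in Hquot.
    apply Hquot. repeat split; auto; lra. }
  assert (Hbound : Rabs ((f y - f x) / (y - x)) <= K).
  { unfold K. replace ((f y - f x) / (y - x)) with ((f y - f x) / (y - x) - f' x + f' x) by ring.
    eapply Rle_trans; [apply Rabs_triang | lra]. }
  replace (f y - f x) with ((y - x) * ((f y - f x) / (y - x))) by (field; lra).
  rewrite Rabs_mult.
  apply Rle_lt_trans with (Rabs (y - x) * K).
  { apply Rmult_le_compat_l; [apply Rabs_pos | exact Hbound]. }
  apply Rlt_le_trans with (eps / K * K); [now apply Rmult_lt_compat_r | right; field; lra].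
Qed.

(* Clamping to [[p,r]]: it extends a function given on [[p,r]] to a function on
   all of R that is continuous wherever the original is continuous on [[p,r]]. *)
Definition clamp (p r x : R) : R := Rmax p (Rmin r x).

Lemma clamp_in (p r x : R) : p <= r -> p <= clamp p r x <= r.
Proof. intros. unfold clamp, Rmax, Rmin. repeat destruct Rle_dec; lra. Qed.

Lemma clamp_id (p r x : R) : p <= x <= r -> clamp p r x = x.
Proof. intros. unfold clamp, Rmax, Rmin. repeat destruct Rle_dec; lra. Qed.

Lemma clamp_contract (p r x y : R) :
  p <= r -> p <= x <= r -> Rabs (clamp p r y - x) <= Rabs (y - x).
Proof.
  intros. unfold clamp, Rmax, Rmin, Rabs.
  repeat (destruct Rle_dec || destruct Rcase_abs); lra.
Qed.

Lemma clamp_derivable (f f' : R -> R) (a b p r c : R) :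
  deriv_on f f' a b -> a <= p -> r <= b -> p < c < r ->
  derivable_pt_lim (fun x => f (clamp p r x)) c (f' c).
Proof.
  intros Hf Hap Hrb Hc eps Heps.
  destruct (Hf c ltac:(lra) eps Heps) as [alp [Halp Hquot]].
  assert (Hdel : 0 < Rmin alp (Rmin (c - p) (r - c))).
  { apply Rmin_glb_lt; [exact Halp | apply Rmin_glb_lt; lra]. }
  exists (mkposreal _ Hdel). intros h Hh0 Hh. simpl in Hh.
  apply Rmin_Rgt_l in Hh as [Hh1 Hh2]. apply Rmin_Rgt_l in Hh2 as [Hh2 Hh3].
  assert (Hch : p < c + h < r) by (unfold Rabs in *; destruct Rcase_abs; lra).
  rewrite !clamp_id by lra.
  specialize (Hquot h). simpl in Hquot. unfold R_dist in Hquot. rewrite Rminus_0_r in Hquot.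
  apply Hquot. repeat split; auto; lra.
Qed.

Lemma clamp_continuous (f f' : R -> R) (a b p r c : R) :
  deriv_on f f' a b -> a <= p -> p <= r -> r <= b -> p <= c <= r ->
  continuity_pt (fun x => f (clamp p r x)) c.
Proof.
  intros Hf Hap Hpr Hrb Hc eps Heps.
  destruct (deriv_on_continuous f f' a b c Hf ltac:(lra) eps Heps) as [del [Hdel Hclose]].
  exists del; split; [exact Hdel|].
  intros y [_ Hy]. simpl in *. unfold R_dist in *. rewrite (clamp_id p r c) by lra.
  pose proof (clamp_in p r y Hpr).
  apply Hclose; [lra|]. eapply Rle_lt_trans; [apply clamp_contract; lra | exact Hy].
Qed.

(* A function whose derivative is nonnegative on [[p,r]] inside [[a,b]] increases from
   [p] to [r]: the mean value theorem applied to the clamped function. *)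
Lemma deriv_on_nonneg_mono (f f' : R -> R) (a b p r : R) :
  deriv_on f f' a b -> a <= p -> p <= r -> r <= b ->
  (forall t, p <= t <= r -> 0 <= f' t) -> f p <= f r.
Proof.
  intros Hf Hap Hpr Hrb Hpos.
  destruct (MVT_gen (fun x => f (clamp p r x)) p r f') as [c [Hc Emvt]].
  - intros c Hc. rewrite Rmin_left, Rmax_right in Hc by lra.
    apply is_derive_Reals. now apply (clamp_derivable f f' a b).
  - intros c Hc. rewrite Rmin_left, Rmax_right in Hc by lra.
    now apply (clamp_continuous f f' a b).
  - rewrite Rmin_left, Rmax_right in Hc by lra.
    rewrite !clamp_id in Emvt by lra.
    assert (0 <= f' c * (r - p)) by (apply Rmult_le_pos; [apply Hpos; lra | lra]).
    lra.
Qed.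

Definition tp (c : R) (k : nat) (x : R) : R := if Rle_dec x c then 0 else (x - c) ^ k.

(* At the knot, [(x - c)_+^(k+2)] has derivative 0: its difference quotient is
   [0] or [h^(k+1)], bounded by [|h|] for [|h| < 1]. *)
Lemma tp_derivable_knot (c : R) (k : nat) :
  derivable_pt_lim (tp c (S (S k))) c 0.
Proof.
  intros eps Heps.
  assert (Hdel : 0 < Rmin 1 eps) by (apply Rmin_glb_lt; lra).
  exists (mkposreal _ Hdel). intros h Hh0 Hh. simpl in Hh.
  apply Rmin_Rgt_l in Hh as [Hh1 Hh2].
  unfold tp. destruct (Rle_dec c c) as [_|]; [|lra].
  destruct (Rle_dec (c + h) c).
  - replace ((0 - 0) / h - 0) with 0 by (field; exact Hh0). now rewrite Rabs_R0.
  - replace (((c + h - c) ^ S (S k) - 0) / h - 0) with (h * h ^ k) by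
      (replace (c + h - c) with h by ring; simpl; field; exact Hh0).
    rewrite Rabs_mult, <- RPow_abs.
    assert (Rabs h ^ k <= 1).
    { rewrite <- (pow1 k). apply pow_incr. split; [apply Rabs_pos | lra]. }
    pose proof (Rabs_pos h). nra.
Qed.

(* [d/dx (x - c)_+^(k+2) = (k+2) (x - c)_+^(k+1)]: away from the knot the truncated
   power locally agrees with [0] or with the polynomial [(x - c)^(k+2)]. *)
Lemma tp_derivable (c : R) (k : nat) (x : R) :
  derivable_pt_lim (tp c (S (S k))) x (INR (S (S k)) * tp c (S k) x).
Proof.
  destruct (Rtotal_order x c) as [Hlt|[->|Hgt]].
  - apply is_derive_Reals.
    apply is_derive_ext_loc with (fun _ => 0).
    { apply filter_imp with (2 := open_lt c x Hlt). intros t Ht.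
      unfold tp. destruct (Rle_dec t c); [reflexivity | lra]. }
    unfold tp. destruct (Rle_dec x c) as [_|]; [|lra].
    rewrite Rmult_0_r. now auto_derive.
  - unfold tp at 2. destruct (Rle_dec c c) as [_|]; [|lra].
    rewrite Rmult_0_r. apply tp_derivable_knot.
  - apply is_derive_Reals.
    apply is_derive_ext_loc with (fun t => (t - c) ^ S (S k)).
    { apply filter_imp with (2 := open_gt c x Hgt). intros t Ht.
      unfold tp. destruct (Rle_dec t c); [lra | reflexivity]. }
    unfold tp. destruct (Rle_dec x c); [lra|].
    auto_derive; [exact I|].
    change (match k with 0%nat => 1 | S _ => INR k + 1 end) with (INR (S k)).
    rewrite (S_INR (S k)). simpl pow. unfold Rminus. ring.
Qed.

Definition spline (m d : R) (k : nat) (x : R) : R :=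
  tp (m - d) k x - 2 * tp m k x + tp (m + d) k x.

Lemma spline_deriv (m d : R) (k : nat) (a b : R) :
  deriv_on (spline m d (S (S k))) (fun x => INR (S (S k)) * spline m d (S k) x) a b.
Proof.
  apply deriv_on_of_derivable. intros x. unfold spline.
  replace (INR (S (S k)) * (tp (m - d) (S k) x - 2 * tp m (S k) x + tp (m + d) (S k) x))
    with (INR (S (S k)) * tp (m - d) (S k) x - 2 * (INR (S (S k)) * tp m (S k) x)
          + INR (S (S k)) * tp (m + d) (S k) x) by ring.
  apply derivable_pt_lim_plus; [apply derivable_pt_lim_minus|]; try apply tp_derivable.
  apply derivable_pt_lim_scal with (f := tp m (S (S k))). apply tp_derivable.
Qed.

(* For [k = 1] the spline is the hat function over [[m-d, m+d]]. *)
Lemma spline_1_nonneg (m d x : R) : 0 < d -> 0 <= spline m d 1 x.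
Proof. intros Hd. unfold spline, tp. repeat destruct Rle_dec; simpl; lra. Qed.

Lemma spline_left (m d x : R) (k : nat) : 0 < d -> x <= m - d -> spline m d k x = 0.
Proof.
  intros Hd Hx. unfold spline, tp.
  destruct (Rle_dec x (m - d)); [|lra]. destruct (Rle_dec x m); [|lra].
  destruct (Rle_dec x (m + d)); [ring | lra].
Qed.

Lemma spline_4_right (m d x : R) :
  0 < d -> m + d <= x -> spline m d 4 x = 12 * d ^ 2 * (x - m) ^ 2 + 2 * d ^ 4.
Proof.
  intros Hd Hx. unfold spline, tp.
  destruct (Rle_dec x (m - d)); [lra|]. destruct (Rle_dec x m); [lra|].
  destruct (Rle_dec x (m + d)).
  - assert (x = m + d) by lra. subst x. ring.
  - ring.
Qed.

(* The quadratic [Q - 2xM + x^2 W]; for the partial moments of [w] at the points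
   [pt i] it is [sum w_i (pt i - x)^2]. *)
Definition quad (Q M W x : R) : R := Q - 2 * x * M + x ^ 2 * W.

Definition moment_condition (Q M W p r : R) : Prop :=
  W * r >= M /\ M >= W * p -> W * Q >= M ^ 2.

(* Completing the square: [W quad(x) = (xW - M)^2 + (WQ - M^2)]. *)
Lemma quad_nonneg (Q M W x : R) : 0 < W -> W * Q >= M ^ 2 -> 0 <= quad Q M W x.
Proof.
  intros HW HQ. unfold quad.
  assert (W * (Q - 2 * x * M + x ^ 2 * W) = (x * W - M) ^ 2 + (W * Q - M ^ 2)) by ring.
  pose proof (pow2_ge_0 (x * W - M)). nra.
Qed.

Lemma quad_diff (Q M W x y : R) :
  quad Q M W y - quad Q M W x = (y - x) * (W * (y + x) - 2 * M).
Proof. unfold quad. ring. Qed.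

(* If the quadratic increases across a gap [[p,r]] and its slope [-2(M - pW)] at
   the left end is nonpositive, its value at [p] is nonnegative. *)
Lemma quad_left_nonneg (Q M W p r : R) :
  p < r -> moment_condition Q M W p r ->
  quad Q M W p < quad Q M W r -> p * W <= M -> 0 <= quad Q M W p.
Proof.
  intros Hpr Hcond Hincr Hslope. pose proof (quad_diff Q M W p r) as E.
  assert (HW : 0 < W).
  { destruct (Rle_lt_dec W 0) as [HW|HW]; [|exact HW].
    assert (W * (r + p) - 2 * M <= 0) by nra. nra. }
  destruct (Rge_dec (W * r) M) as [Hr|Hr].
  - apply quad_nonneg; [exact HW | apply Hcond; lra].
  - assert (W * (r + p) - 2 * M < 0) by nra. nra.
Qed.

(* The mirror image: a quadratic that does not increase across [[p,r]] and has
   positive slope at [r] is nonnegative at [r]. *)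
Lemma quad_right_nonneg (Q M W p r : R) :
  p < r -> moment_condition Q M W p r ->
  quad Q M W r <= quad Q M W p -> M < r * W -> 0 <= quad Q M W r.
Proof.
  intros Hpr Hcond Hdecr Hslope. pose proof (quad_diff Q M W p r) as E.
  assert (HW : 0 < W).
  { destruct (Rle_lt_dec W 0) as [HW|HW]; [|exact HW].
    assert (W * (r + p) - 2 * M > 0) by nra. nra. }
  destruct (Rge_dec M (W * p)) as [Hp|Hp].
  - apply quad_nonneg; [exact HW | apply Hcond; lra].
  - assert (W * (r + p) - 2 * M > 0) by nra. nra.
Qed.

(* Nonnegative at both ends of a gap implies nonnegative on the gap: either the
   quadratic is concave, or its vertex is outside the gap, or the moment
   condition applies at the vertex. *)
Lemma quad_nonneg_between (Q M W p r x : R) :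
  p < r -> moment_condition Q M W p r ->
  0 <= quad Q M W p -> 0 <= quad Q M W r -> p <= x <= r -> 0 <= quad Q M W x.
Proof.
  intros Hpr Hcond Hp Hr Hx.
  destruct (Rle_lt_dec W 0) as [HW|HW].
  - assert (E : (r - p) * quad Q M W x = (r - x) * quad Q M W p + (x - p) * quad Q M W r
        - W * (x - p) * (r - x) * (r - p)) by (unfold quad; ring).
    assert (0 <= (r - x) * quad Q M W p) by nra.
    assert (0 <= (x - p) * quad Q M W r) by nra.
    assert (0 <= - W * (x - p) * (r - x)) by (apply Rmult_le_pos; nra).
    nra.
  - destruct (Rge_dec (W * r) M) as [Hvr|Hvr]; destruct (Rge_dec M (W * p)) as [Hvp|Hvp].
    + apply quad_nonneg; [exact HW | apply Hcond; lra].
    + pose proof (quad_diff Q M W p x). assert (W * (x + p) - 2 * M >= 0) by nra. nra.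
    + pose proof (quad_diff Q M W x r). assert (W * (r + x) - 2 * M <= 0) by nra. nra.
    + nra.
Qed.

Lemma shrunk_window (p r t th : R) :
  p < r -> p <= t <= r -> 0 < th <= 1 ->
  let m := t + th * ((p + r) / 2 - t) in
  let d := th * (r - p) / 4 in
  0 < d /\ p < m - d /\ m + d < r /\ (m - t) ^ 2 <= th ^ 2 * (r - p) ^ 2 / 4.
Proof.
  intros Hpr Ht Hth m d. unfold m, d.
  assert (Hc : Rabs ((p + r) / 2 - t) <= (r - p) / 2) by (unfold Rabs; destruct Rcase_abs; lra).
  assert (Hsq : ((p + r) / 2 - t) ^ 2 <= ((r - p) / 2) ^ 2).
  { rewrite <- (pow2_abs ((p + r) / 2 - t)). apply pow_incr. split; [apply Rabs_pos | exact Hc]. }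
  split; [nra | split; [nra | split; [nra |]]].
  replace ((t + th * ((p + r) / 2 - t) - t) ^ 2) with (th ^ 2 * ((p + r) / 2 - t) ^ 2) by ring.
  replace (th ^ 2 * (r - p) ^ 2 / 4) with (th ^ 2 * ((r - p) / 2) ^ 2) by field.
  apply Rmult_le_compat_l; [apply pow2_ge_0 | exact Hsq].
Qed.

Lemma choose_window (Q M W p r : R) :
  p < r -> 0 < W -> W * r >= M -> M >= W * p -> M ^ 2 > W * Q ->
  exists m d, 0 < d /\ p < m - d /\ m + d < r /\ 6 * quad Q M W m + d ^ 2 * W < 0.
Proof.
  intros Hpr HW Hr Hp Hdisc.
  set (t := M / W). set (D := M ^ 2 - W * Q). set (K := W * W * (r - p) ^ 2).
  assert (Ht : p <= t <= r).
  { unfold t. split; [apply Rmult_le_reg_r with W | apply Rmult_le_reg_r with W];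
      try exact HW; field_simplify; lra. }
  assert (HD : 0 < D) by (unfold D; lra).
  assert (HK : 0 < K) by (unfold K; apply Rmult_lt_0_compat; [nra | apply pow_lt; lra]).
  set (th := Rmin 1 (D / K)).
  assert (Hth : 0 < th <= 1).
  { split; [apply Rmin_glb_lt; [lra | now apply Rdiv_lt_0_compat] | apply Rmin_l]. }
  assert (HthK : th * K <= D).
  { assert (th <= D / K) by apply Rmin_r.
    apply Rmult_le_compat_r with (r := K) in H; [|lra].
    replace (D / K * K) with D in H by (field; lra). exact H. }
  destruct (shrunk_window p r t th Hpr Ht Hth) as [Hd [Hl [Hr' Hm]]].
  eexists; eexists; split; [exact Hd|split; [exact Hl|split; [exact Hr'|]]].
  set (m := t + th * ((p + r) / 2 - t)) in *.
  apply Rmult_lt_reg_l with W; [exact HW|]. rewrite Rmult_0_r.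
  assert (Eq : W * quad Q M W m = W ^ 2 * (m - t) ^ 2 - D) by (unfold quad, D, t; field; lra).
  assert (th ^ 2 * K <= D) by nra.
  assert (W ^ 2 * (m - t) ^ 2 <= th ^ 2 * K / 4).
  { unfold K. replace (th ^ 2 * (W * W * (r - p) ^ 2) / 4) with (W ^ 2 * (th ^ 2 * (r - p) ^ 2 / 4)) by field.
    apply Rmult_le_compat_l; [apply pow2_ge_0 | exact Hm]. }
  replace (W * (6 * quad Q M W m + (th * (r - p) / 4) ^ 2 * W))
    with (6 * (W * quad Q M W m) + th ^ 2 * K / 16) by (unfold K; field).
  lra.
Qed.

(* [Phi] is an antiderivative of [quad * f''']: the integration-by-parts kernel
   behind the sufficiency proof. *)
Definition Phi (f f1 f2 : R -> R) (Q M W x : R) : R :=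
  quad Q M W x * f2 x + 2 * (M - x * W) * f1 x + 2 * W * f x.

Lemma Phi_deriv (f f1 f2 f3 : R -> R) (Q M W a b : R) :
  deriv_on f f1 a b -> deriv_on f1 f2 a b -> deriv_on f2 f3 a b ->
  deriv_on (Phi f f1 f2 Q M W) (fun x => quad Q M W x * f3 x) a b.
Proof.
  intros D1 D2 D3.
  assert (Dquad : deriv_on (quad Q M W) (fun x => 2 * x * W - 2 * M) a b).
  { apply deriv_on_of_is_derive. intros x. unfold quad. auto_derive; [exact I | ring]. }
  assert (Dlin : deriv_on (fun x => 2 * (M - x * W)) (fun _ => - 2 * W) a b).
  { apply deriv_on_of_is_derive. intros x. auto_derive; [exact I | ring]. }
  apply deriv_on_ext with (3 := deriv_on_plus _ _ _ _ a b
     (deriv_on_plus _ _ _ _ a b (deriv_on_mul _ _ _ _ a b Dquad D3)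
                                (deriv_on_mul _ _ _ _ a b Dlin D2))
     (deriv_on_scal (2 * W) _ _ a b D1)).
  - intros x. reflexivity.
  - intros x. ring.
Qed.

Lemma Phi_mono (f f1 f2 f3 : R -> R) (Q M W a b p r : R) :
  deriv_on f f1 a b -> deriv_on f1 f2 a b -> deriv_on f2 f3 a b ->
  (forall t, a <= t <= b -> 0 <= f3 t) ->
  a <= p -> p <= r -> r <= b -> (forall t, p <= t <= r -> 0 <= quad Q M W t) ->
  Phi f f1 f2 Q M W p <= Phi f f1 f2 Q M W r.
Proof.
  intros D1 D2 D3 Hf3 Hap Hpr Hrb Hquad.
  apply (deriv_on_nonneg_mono _ _ a b p r (Phi_deriv f f1 f2 f3 Q M W a b D1 D2 D3));
    try assumption.
  intros t Ht. apply Rmult_le_pos; [now apply Hquad | apply Hf3; lra].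
Qed.

Lemma sum1_nonneg (F : nat -> R) (m : nat) :
  (forall i, (1 <= i <= m)%nat -> 0 <= F i) -> 0 <= sum1 F m.
Proof.
  induction m as [|m IH]; intros HF; simpl; [lra|].
  assert (0 <= sum1 F m) by (apply IH; intros; apply HF; lia).
  assert (0 <= F (S m)) by (apply HF; lia). lra.
Qed.

Lemma sum1_ext (F G : nat -> R) (m : nat) :
  (forall i, (1 <= i <= m)%nat -> F i = G i) -> sum1 F m = sum1 G m.
Proof.
  induction m as [|m IH]; intros EFG; simpl; [reflexivity|].
  rewrite IH by (intros; apply EFG; lia). rewrite EFG by lia. reflexivity.
Qed.

Lemma sum1_zero_tail (F : nat -> R) (j m : nat) :
  (j <= m)%nat -> (forall i, (j < i <= m)%nat -> F i = 0) -> sum1 F m = sum1 F j.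
Proof.
  induction m as [|m IH]; intros Hjm HF.
  - now replace j with 0%nat by lia.
  - destruct (Nat.eq_dec j (S m)) as [->|Hne]; [reflexivity|].
    simpl. rewrite IH, HF by (lia || intros; apply HF; lia). ring.
Qed.

Lemma first_minimizer (e : nat -> R) (n : nat) : (1 <= n)%nat ->
  exists k, (1 <= k <= n)%nat /\ (forall i, (1 <= i <= n)%nat -> e k <= e i) /\
            (forall i, (1 <= i < k)%nat -> e k < e i).
Proof.
  induction n as [|n IH]; intros Hn; [lia|].
  destruct (Nat.eq_dec n 0) as [->|Hn0].
  { exists 1%nat. split; [lia | split]; intros i Hi; [replace i with 1%nat by lia; lra | lia]. }
  destruct IH as [k [Hk [Hmin Hfirst]]]; [lia|].
  destruct (Rlt_le_dec (e (S n)) (e k)) as [Hlt|Hle].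
  - exists (S n). split; [lia | split]; intros i Hi.
    + destruct (Nat.eq_dec i (S n)) as [->|]; [lra|].
      assert (e k <= e i) by (apply Hmin; lia). lra.
    + assert (e k <= e i) by (apply Hmin; lia). lra.
  - exists k. split; [lia | split; [|exact Hfirst]].
    intros i Hi. destruct (Nat.eq_dec i (S n)) as [->|]; [exact Hle | apply Hmin; lia].
Qed.

Section Moments.

Variables (pt w : nat -> R).

Definition Wm (j : nat) : R := sum1 w j.
Definition Mm (j : nat) : R := sum1 (fun i => w i * pt i) j.
Definition Qm (j : nat) : R := sum1 (fun i => w i * pt i ^ 2) j.
Definition mq (j : nat) (x : R) : R := quad (Qm j) (Mm j) (Wm j) x.

Lemma mq_step (k : nat) : mq (S k) (pt (S k)) = mq k (pt (S k)).
Proof. unfold mq, quad, Qm, Mm, Wm. simpl. ring. Qed.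

Lemma slope_step (k : nat) :
  Mm (S k) - pt (S k) * Wm (S k) = Mm k - pt (S k) * Wm k.
Proof. unfold Mm, Wm. simpl. ring. Qed.

Lemma sum1_weighted_quadratic (A B x : R) (j : nat) :
  sum1 (fun i => w i * (A * (pt i - x) ^ 2 + B)) j = A * mq j x + B * Wm j.
Proof.
  induction j as [|j IH]; [unfold mq, quad, Qm, Mm, Wm; simpl; ring|].
  cbn [sum1]. rewrite IH. unfold mq, quad, Qm, Mm, Wm. simpl. ring.
Qed.

Variable n : nat.
Hypothesis Hdec : forall i, (1 <= i < n)%nat -> pt (S i) < pt i.

Lemma pt_antitone (i k : nat) : (1 <= i <= k)%nat -> (k <= n)%nat -> pt k <= pt i.
Proof.
  intros Hik Hkn. induction k as [|k IH]; [lia|].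
  destruct (Nat.eq_dec i (S k)) as [->|Hne]; [lra|].
  assert (pt (S k) < pt k) by (apply Hdec; lia).
  assert (pt k <= pt i) by (apply IH; lia). lra.
Qed.

(* Evaluating the test functional on the degree-4 spline of a window inside the
   gap [(pt (S j), pt j)]: points right of the window contribute a weighted
   quadratic, points left of it nothing. *)
Lemma spline_test_sum (j : nat) (m d : R) :
  (1 <= j <= n - 1)%nat -> 0 < d -> pt (S j) <= m - d -> m + d <= pt j ->
  sum1 (fun i => w i * spline m d 4 (pt i)) n = 12 * d ^ 2 * mq j m + 2 * d ^ 4 * Wm j.
Proof.
  intros Hj Hd Hl Hr.
  rewrite (sum1_zero_tail _ j n); [| lia |].
  2: { intros i Hi. rewrite spline_left; [ring | exact Hd |].
       assert (pt i <= pt (S j)) by (apply pt_antitone; lia). lra. }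
  rewrite <- (sum1_weighted_quadratic (12 * d ^ 2) (2 * d ^ 4) m j).
  apply sum1_ext. intros i Hi. rewrite spline_4_right; [reflexivity | exact Hd |].
  assert (pt j <= pt i) by (apply pt_antitone; lia). lra.
Qed.

(* Necessity: if the functional is nonnegative on all [f] with [f''' >= 0], then
   the moment condition holds at every gap; otherwise the spline of the window
   given by [choose_window] makes it negative. *)
Lemma necessity (a b : R) :
  (forall f f1 f2 f3 : R -> R,
      deriv_on f f1 a b -> deriv_on f1 f2 a b -> deriv_on f2 f3 a b ->
      (forall t, a <= t <= b -> 0 <= f3 t) ->
      0 <= sum1 (fun i => w i * f (pt i)) n) ->
  forall j, (1 <= j <= n - 1)%nat -> moment_condition (Qm j) (Mm j) (Wm j) (pt (S j)) (pt j).
Proof.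
  intros Htest j Hj [Hr Hp].
  assert (Hgap : pt (S j) < pt j) by (apply Hdec; lia).
  assert (HW : 0 <= Wm j) by nra.
  destruct (Rge_dec (Wm j * Qm j) (Mm j ^ 2)) as [Hok|Hfail]; [exact Hok|]. exfalso.
  destruct (Req_dec (Wm j) 0) as [HW0|HW0].
  { rewrite HW0 in *. assert (Mm j = 0) by lra. nra. }
  destruct (choose_window (Qm j) (Mm j) (Wm j) (pt (S j)) (pt j) Hgap ltac:(lra) Hr Hp
             ltac:(lra)) as [m [d [Hd [Hl [Hr' Hneg]]]]].
  assert (Hsum := Htest _ _ _ _ (spline_deriv m d 2 a b)
                  (deriv_on_scal _ _ _ a b (spline_deriv m d 1 a b))
                  (deriv_on_scal _ _ _ a b (deriv_on_scal _ _ _ a b (spline_deriv m d 0 a b)))).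
  rewrite (spline_test_sum j m d Hj Hd) in Hsum by lra.
  assert (0 <= 12 * d ^ 2 * mq j m + 2 * d ^ 4 * Wm j).
  { apply Hsum. intros t _. pose proof (spline_1_nonneg m d t Hd). simpl INR. nra. }
  unfold mq in *. assert (0 < d ^ 2) by (apply pow_lt; lra). nra.
Qed.

End Moments.

Section Sufficiency.

Variables (a b : R) (n : nat) (pt w : nat -> R).
Hypothesis Hdec : forall i, (1 <= i < n)%nat -> pt (S i) < pt i.
Hypothesis Hin : forall i, (1 <= i <= n)%nat -> a <= pt i <= b.
Hypothesis HW : sum1 w n = 0.
Hypothesis HM : sum1 (fun i => w i * pt i) n = 0.
Hypothesis HQ : sum1 (fun i => w i * pt i ^ 2) n = 0.
Hypothesis Hcond : forall j, (1 <= j <= n - 1)%nat ->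
  moment_condition (Qm pt w j) (Mm pt w j) (Wm w j) (pt (S j)) (pt j).

Lemma mq_last (x : R) : mq pt w n x = 0.
Proof. unfold mq, quad, Qm, Mm, Wm. rewrite HW, HM, HQ. ring. Qed.

(* The values [e_k = mq k (pt k)] are nonnegative.  They vanish at [k = 1] and
   [k = n]; at a first minimiser [k] with [e_k < 0], the sign of the slope of
   [mq k] at [pt k] lets [quad_left_nonneg] (on the gap to the left) or
   [quad_right_nonneg] (on the gap to the right) conclude [e_k >= 0]. *)
Lemma node_values_nonneg (i : nat) : (1 <= i <= n)%nat -> 0 <= mq pt w i (pt i).
Proof.
  intros Hi.
  destruct (first_minimizer (fun k => mq pt w k (pt k)) n ltac:(lia))
    as [k0 [Hk0 [Hmin Hfirst]]].
  cbv beta in Hmin, Hfirst.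
  enough (0 <= mq pt w k0 (pt k0)) by (specialize (Hmin i Hi); lra).
  destruct (Rle_lt_dec 0 (mq pt w k0 (pt k0))) as [Hok|Hneg]; [exact Hok|]. exfalso.
  assert (Hfirst_node : mq pt w 1 (pt 1) = 0) by (unfold mq, quad, Qm, Mm, Wm; simpl; ring).
  destruct k0 as [|k]; [lia|].
  destruct (Nat.eq_dec k 0) as [->|Hk1]; [lra|].
  destruct (Nat.eq_dec (S k) n) as [Hkn|Hkn]; [rewrite Hkn, mq_last in Hneg; lra|].
  destruct (Rle_lt_dec (pt (S k) * Wm w (S k)) (Mm pt w (S k))) as [Hslope|Hslope].
  - assert (Hleft : 0 <= mq pt w k (pt (S k))).
    { apply (quad_left_nonneg _ _ _ _ (pt k)); [apply Hdec; lia | apply Hcond; lia | |].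
      - change (mq pt w k (pt (S k)) < mq pt w k (pt k)).
        rewrite <- mq_step. apply Hfirst. lia.
      - pose proof (slope_step pt w k). lra. }
    rewrite mq_step in Hneg. lra.
  - assert (Hright : 0 <= mq pt w (S k) (pt (S k))).
    { apply (quad_right_nonneg _ _ _ (pt (S (S k)))); [apply Hdec; lia | apply Hcond; lia | |].
      - change (mq pt w (S k) (pt (S k)) <= mq pt w (S k) (pt (S (S k)))).
        rewrite <- mq_step. apply Hmin. lia.
      - exact Hslope. }
    lra.
Qed.

Lemma mq_nonneg_on_gap (j : nat) (x : R) :
  (1 <= j <= n - 1)%nat -> pt (S j) <= x <= pt j -> 0 <= mq pt w j x.
Proof.
  intros Hj Hx.
  apply (quad_nonneg_between _ _ _ (pt (S j)) (pt j)); [apply Hdec; lia | apply Hcond; lia | | | exact Hx].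
  - change (0 <= mq pt w j (pt (S j))). rewrite <- mq_step.
    apply node_values_nonneg. lia.
  - apply node_values_nonneg. lia.
Qed.

(* Summation by parts: [Phi] for the moments up to [j] differs from [Phi] for
   the moments up to [j-1] at [pt j] by exactly [2 w_j f (pt j)]. *)
Lemma Phi_telescope (f f1 f2 : R -> R) (m : nat) :
  sum1 (fun j => Phi f f1 f2 (Qm pt w j) (Mm pt w j) (Wm w j) (pt j)
               - Phi f f1 f2 (Qm pt w j) (Mm pt w j) (Wm w j) (pt (S j))) m
  = 2 * sum1 (fun i => w i * f (pt i)) m
    - Phi f f1 f2 (Qm pt w m) (Mm pt w m) (Wm w m) (pt (S m)).
Proof.
  induction m as [|m IH].
  - unfold Phi, quad, Qm, Mm, Wm. simpl. ring.
  - cbn [sum1]. rewrite IH. unfold Phi, quad, Qm, Mm, Wm. simpl. ring.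
Qed.

(* Sufficiency: [2 sum w_i f(pt i)] telescopes into increments of [Phi] over the
   gaps, each nonnegative since [Phi' = mq * f''' >= 0] there. *)
Lemma sufficiency (f f1 f2 f3 : R -> R) :
  deriv_on f f1 a b -> deriv_on f1 f2 a b -> deriv_on f2 f3 a b ->
  (forall t, a <= t <= b -> 0 <= f3 t) ->
  0 <= sum1 (fun i => w i * f (pt i)) n.
Proof.
  intros D1 D2 D3 Hf3.
  assert (Hlast : forall x, Phi f f1 f2 (Qm pt w n) (Mm pt w n) (Wm w n) x = 0).
  { intros x. unfold Phi. fold (mq pt w n x). rewrite mq_last.
    unfold Mm, Wm. rewrite HW, HM. ring. }
  pose proof (Phi_telescope f f1 f2 n) as Htel. rewrite Hlast in Htel.
  enough (0 <= sum1 (fun j => Phi f f1 f2 (Qm pt w j) (Mm pt w j) (Wm w j) (pt j)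
                           - Phi f f1 f2 (Qm pt w j) (Mm pt w j) (Wm w j) (pt (S j))) n)
    by lra.
  apply sum1_nonneg. intros j Hj.
  destruct (Nat.eq_dec j n) as [->|Hjn]; [rewrite !Hlast; lra|].
  enough (Phi f f1 f2 (Qm pt w j) (Mm pt w j) (Wm w j) (pt (S j))
          <= Phi f f1 f2 (Qm pt w j) (Mm pt w j) (Wm w j) (pt j)) by lra.
  apply (Phi_mono f f1 f2 f3 _ _ _ a b); try assumption.
  - apply Hin; lia.
  - left. apply Hdec; lia.
  - apply Hin; lia.
  - intros t Ht. apply mq_nonneg_on_gap; [lia | exact Ht].
Qed.

End Sufficiency.

Theorem mainTheorem3 (a b : R) (n : nat) (pt w : nat -> R)
  (Hdec : forall i, (1 <= i < n)%nat -> pt (S i) < pt i)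
  (Hin : forall i, (1 <= i <= n)%nat -> a <= pt i <= b)
  (HW : sum1 w n = 0)
  (HM : sum1 (fun i => w i * pt i) n = 0)
  (HQ : sum1 (fun i => w i * pt i ^ 2) n = 0) :
  (forall f f1 f2 f3 : R -> R,
      deriv_on f f1 a b -> deriv_on f1 f2 a b -> deriv_on f2 f3 a b ->
      (forall t, a <= t <= b -> 0 <= f3 t) ->
      0 <= sum1 (fun i => w i * f (pt i)) n)
  <->
  (forall j : nat, (1 <= j <= n - 1)%nat ->
      sum1 w j * pt j >= sum1 (fun i => w i * pt i) j /\
      sum1 (fun i => w i * pt i) j >= sum1 w j * pt (S j) ->
      sum1 w j * sum1 (fun i => w i * pt i ^ 2) j >= (sum1 (fun i => w i * pt i) j) ^ 2).
Proof.
  split.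
  - exact (necessity pt w n Hdec a b).
  - intros Hcond. exact (sufficiency a b n pt w Hdec Hin HW HM HQ Hcond).
Qed.
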